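(* Let $r\ge1$ and let $\lambda=(\lambda_1,\dots,\lambda_{r+1})\in\mathbb{Z}^{r+1}$ be such that $\lambda+\rho$ is a partition. For $m\in\mathrm{Lu}(\lambda+\rho)$ define $f(m)=(a_{i,j})_{1\le i<j\le r+1}$ recursively by $a_{i,r+2}=(\lambda+\rho)_i=\lambda_i+r+1-i$ and $a_{i,j}=a_{i,j+1}-m_{i,j}$. Then $f$ is a bijection $\mathrm{Lu}(\lambda+\rho)\to\mathrm{GT}(\lambda+\rho)$, with inverse $T=(a_{i,j})\mapsto(m_{i,j})$, $m_{i,j}=a_{i,j+1}-a_{i,j}$, and it is weight-preserving: $z^{f(m)}=z^m$.
   Context: Positive roots of $\mathrm{GL}_{r+1}$ are indexed by pairs $(i,j)$ with $1\le i<j\le r+1$; $N=r(r+1)/2$; $\mathbb{N}=\mathbb{Z}_{\ge0}$; $\rho=(r,r-1,\dots,1,0)$. For $\lambda\in\mathbb{Z}^{r+1}$ put $\Lambda_i=\lambda_i-\lambda_{i+1}$. For $m=(m_{i,j})_{1\le i<j\le r+1}\in\mathbb{N}^N$ define \[ s_{i,j}=\Lambda_i+\sum_{k=j}^{r}m_{i+1,k+1}-\sum_{k=j}^{r+1}m_{i,k}. \] The set of Lusztig data $\mathrm{Lu}(\lambda+\rho)$ is the set of $m\in\mathbb{N}^N$ with $s_{i,j}\ge-1$ for all $1\le i<j\le r+1$. For a partition $\mu=(\mu_1\ge\dots\ge\mu_{r+1}\ge0)$, $\mathrm{GT}(\mu)$ (Gelfand–Tsetlin patterns with top row $\mu$)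 is the set of $(a_{i,j})_{1\le i<j\le r+1}\in\mathbb{N}^N$ such that $a_{i,j+1}\ge a_{i,j}\ge a_{i+1,j+1}$ for all $1\le i<j\le r+1$, where $a_{i,r+2}:=\mu_i$. For formal variables $z_1,\dots,z_{r+1}$ the weights are $z^m=\prod_{i<j}(z_i/z_j)^{m_{i,j}}$ and $z^T=\prod_{i<j}(z_i/z_j)^{a_{i,j+1}-a_{i,j}}$ for $T=(a_{i,j})$. *)

From HB Require Import structures.
From mathcomp Require Import all_boot all_order all_algebra.
Set Implicit Arguments. Unset Strict Implicit. Unset Printing Implicit Defensive.
Import Order.TTheory GRing.Theory Num.Theory.
Local Open Scope ring_scope.

(* Positive roots of GL_{r+1}: pairs (i,j) with 1 <= i < j <= r+1
   (1-based, stored as ordinals of 'I_(r+2)). *)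
Definition posroot (r : nat) :=
  {p : 'I_(r.+2) * 'I_(r.+2) | (0 < p.1 < p.2)%N}.

(* Triangular arrays (x_{i,j})_{1<=i<j<=r+1} with integer entries; elements
   of N^N are those with nonnegative entries. *)
Definition tarray (r : nat) := {ffun posroot r -> int}.

Definition rt (r : nat) (p : posroot r) : nat := (val p).1.
Definition ct (r : nat) (p : posroot r) : nat := (val p).2.

(* entry (i,j) of an array, for 1 <= i < j <= r+1 (0 outside that range) *)
Definition get (r : nat) (x : tarray r) (i j : nat) : int :=
  if insub (inord i : 'I_(r.+2), inord j : 'I_(r.+2)) is Some p then x p else 0.

(* lambda_i, 1-based, 1 <= i <= r+1 *)
Definition lamn (r : nat) (lam : 'I_(r.+1) -> int) (i : nat) : int :=
  lam (inord i.-1).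

(* (lambda + rho)_i = lambda_i + r + 1 - i *)
Definition mu (r : nat) (lam : 'I_(r.+1) -> int) (i : nat) : int :=
  lamn lam i + (r.+1 - i)%:Z.

Definition Lam (r : nat) (lam : 'I_(r.+1) -> int) (i : nat) : int :=
  lamn lam i - lamn lam i.+1.

Definition is_partition (r : nat) (lam : 'I_(r.+1) -> int) : Prop :=
  (forall i : nat, (1 <= i <= r)%N -> mu lam i.+1 <= mu lam i) /\
  0 <= mu lam r.+1.

Definition s_ij (r : nat) (lam : 'I_(r.+1) -> int) (m : tarray r) (i j : nat) : int :=
  Lam lam i + \sum_(j <= k < r.+1) get m i.+1 k.+1
            - \sum_(j <= k < r.+2) get m i k.

Definition Lu (r : nat) (lam : 'I_(r.+1) -> int) (m : tarray r) : Prop :=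
  (forall p : posroot r, 0 <= m p) /\
  (forall p : posroot r, -1 <= s_ij lam m (rt p) (ct p)).

Definition aext (r : nat) (lam : 'I_(r.+1) -> int) (a : tarray r) (i j : nat) : int :=
  if j == r.+2 then mu lam i else get a i j.

Definition GT (r : nat) (lam : 'I_(r.+1) -> int) (a : tarray r) : Prop :=
  (forall p : posroot r, 0 <= a p) /\
  (forall p : posroot r,
      a p <= aext lam a (rt p) (ct p).+1 /\
      aext lam a (rt p).+1 (ct p).+1 <= a p).

(* the recursion a_{i,r+2} = mu_i, a_{i,j} = a_{i,j+1} - m_{i,j};
   frec m i d = a_{i, r+2-d} *)
Fixpoint frec (r : nat) (lam : 'I_(r.+1) -> int) (m : tarray r) (i d : nat) : int :=
  match d with
  | 0 => mu lam i
  | d'.+1 => frec lam m i d' - get m i (r.+2 - d)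
  end.

Definition f (r : nat) (lam : 'I_(r.+1) -> int) (m : tarray r) : tarray r :=
  [ffun p => frec lam m (rt p) (r.+2 - ct p)].

Definition g (r : nat) (lam : 'I_(r.+1) -> int) (a : tarray r) : tarray r :=
  [ffun p => aext lam a (rt p) (ct p).+1 - a p].

(* variables z_1, ..., z_{r+1} (1-based) *)
Definition zn (F : fieldType) (r : nat) (z : 'I_(r.+1) -> F) (i : nat) : F :=
  z (inord i.-1).

Definition zwm (F : fieldType) (r : nat) (z : 'I_(r.+1) -> F) (m : tarray r) : F :=
  \prod_(p : posroot r) (zn z (rt p) / zn z (ct p)) ^ (m p).

Definition zwT (F : fieldType) (r : nat) (lam : 'I_(r.+1) -> int)
    (z : 'I_(r.+1) -> F) (a : tarray r) : F :=
  \prod_(p : posroot r)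
     (zn z (rt p) / zn z (ct p)) ^ (aext lam a (rt p) (ct p).+1 - a p).

From HB Require Import structures.
From mathcomp Require Import all_boot all_order all_algebra.
From mathcomp Require Import zify ring.
Import Order.TTheory GRing.Theory Num.Theory.
Local Open Scope ring_scope.

Set Implicit Arguments.
Unset Strict Implicit.
Unset Printing Implicit Defensive.

(* Solving the recursion gives a_{i,j} = mu_i - sum_{k >= j} m_{i,k}, and
   g is its telescoping inverse.  For a = f(m) the upper interlacing
   inequality a_{i,j} <= a_{i,j+1} is m_{i,j} >= 0, while the lower one
   a_{i+1,j+1} <= a_{i,j} is s_{i,j} >= -1, because Lambda_i = mu_i - mu_{i+1} - 1
   makes s_{i,j} + 1 = a_{i,j} - a_{i+1,j+1}.  Entries of a pattern are
   nonnegative since descending a diagonal ends at some mu_i >= 0, and the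
   weights agree because the exponents of z^{f(m)} are the entries of g(f(m)) = m. *)

Section GelfandTsetlinBijection.

Variables (r : nat) (lam : 'I_(r.+1) -> int).

Lemma posrootP (p : posroot r) :
  [/\ (0 < rt p)%N, (rt p < ct p)%N & (ct p < r.+2)%N].
Proof.
case: p => [[i j] /= ijP]; rewrite /rt /ct /=.
by case/andP: ijP => i_gt0 ij; split; rewrite // ltn_ord.
Qed.

Lemma posroot_at i j :
  (0 < i)%N -> (i < j)%N -> (j < r.+2)%N -> {p : posroot r | rt p = i /\ ct p = j}.
Proof.
move=> i_gt0 ij j_lt; have i_lt : (i < r.+2)%N by apply: ltn_trans j_lt.
have ijP : (0 < (Ordinal i_lt, Ordinal j_lt).1 < (Ordinal i_lt, Ordinal j_lt).2)%N.
  by rewrite /= i_gt0.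
by exists (exist _ (Ordinal i_lt, Ordinal j_lt) ijP).
Qed.

Lemma get_posroot (x : tarray r) (p : posroot r) : get x (rt p) (ct p) = x p.
Proof.
rewrite /get; suff -> : (inord (rt p), inord (ct p)) = val p by rewrite valK.
by case: p => [[i j] ?]; rewrite /rt /ct /= !inord_val.
Qed.

Lemma aext_posroot (a : tarray r) (p : posroot r) : aext lam a (rt p) (ct p) = a p.
Proof.
case: (posrootP p) => _ _ ct_lt.
by rewrite /aext ifN ?get_posroot // neq_ltn ct_lt.
Qed.

Lemma frecE (m : tarray r) i d : (d <= r.+1)%N ->
  frec lam m i d = mu lam i - \sum_(r.+2 - d <= k < r.+2) get m i k.
Proof.
elim: d => [|d IHd] d_le /=; first by rewrite subn0 big_geq // subr0.
rewrite IHd 1?ltnW // (@big_ltn _ _ _ (r.+2 - d.+1)); last by lia.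
have -> : (r.+2 - d.+1).+1 = (r.+2 - d)%N by lia.
ring.
Qed.

Lemma aext_f (m : tarray r) i j : (0 < i)%N -> (i < j)%N -> (j <= r.+2)%N ->
  aext lam (f lam m) i j = mu lam i - \sum_(j <= k < r.+2) get m i k.
Proof.
move=> i_gt0 ij j_le; rewrite /aext.
have [->|j_neq] := eqVneq j r.+2; first by rewrite big_geq // subr0.
have [p [<- <-]] := posroot_at i_gt0 ij (ltac:(lia) : (j < r.+2)%N).
rewrite get_posroot ffunE frecE; last by case: (posrootP p); lia.
by have -> : (r.+2 - (r.+2 - ct p))%N = ct p by case: (posrootP p); lia.
Qed.

Lemma aext_g (a : tarray r) i j : (0 < i)%N -> (i < j)%N -> (j <= r.+2)%N ->
  aext lam a i j = mu lam i - \sum_(j <= k < r.+2) get (g lam a) i k.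
Proof.
move=> i_gt0 ij j_le.
rewrite (@telescope_sumr_eq _ _ _ (aext lam a i)) //.
  by rewrite {2}/aext eqxx; ring.
move=> k /andP[jk k_lt].
have [p [ip kp]] := posroot_at i_gt0 (leq_trans ij jk) k_lt.
by rewrite -ip -kp get_posroot ffunE aext_posroot.
Qed.

Lemma f_row_increment (m : tarray r) (p : posroot r) :
  aext lam (f lam m) (rt p) (ct p).+1 - f lam m p = m p.
Proof.
have [rt_gt0 rt_ct ct_lt] := posrootP p.
have rt_ctS : (rt p < (ct p).+1)%N by apply: ltnW.
have ct_le : (ct p <= r.+2)%N by apply: ltnW.
rewrite -[f lam m p]aext_posroot !aext_f //.
by rewrite (@big_ltn _ _ _ (ct p)) // get_posroot; ring.
Qed.

Lemma gK (m : tarray r) : g lam (f lam m) = m.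
Proof. by apply/ffunP => p; rewrite ffunE f_row_increment. Qed.

Lemma fK (a : tarray r) : f lam (g lam a) = a.
Proof.
apply/ffunP => p; have [rt_gt0 rt_ct ct_lt] := posrootP p.
have ct_le : (ct p <= r.+2)%N by apply: ltnW.
by rewrite -[f _ _ p]aext_posroot aext_f // -aext_g // aext_posroot.
Qed.

Lemma s_ij_f (m : tarray r) (p : posroot r) :
  s_ij lam m (rt p) (ct p) + 1 = f lam m p - aext lam (f lam m) (rt p).+1 (ct p).+1.
Proof.
have [rt_gt0 rt_ct ct_lt] := posrootP p.
have ct_le : (ct p <= r.+2)%N by apply: ltnW.
rewrite -[f lam m p]aext_posroot !aext_f // /s_ij big_add1 /mu /Lam.
have -> : (r.+1 - rt p)%N%:Z = (r.+1 - (rt p).+1)%N%:Z + 1 by lia.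
ring.
Qed.

Hypothesis lam_partition : is_partition lam.

Lemma mu_ge0 i : (0 < i)%N -> (i <= r.+1)%N -> 0 <= mu lam i.
Proof.
case: lam_partition => mu_dec mu_last_ge0 i_gt0 i_le.
apply: le_trans mu_last_ge0 _.
apply: (homo_leq_in (D := [pred k | 0 < k <= r.+1]%N) (f := mu lam)
  (r := fun x y => y <= x)) => //.
- by move=> y x z /= yx zy; apply: le_trans zy yx.
- by move=> x y /andP[? ?] /andP[? ?] k /andP[? ?]; apply/andP; lia.
- by move=> k /andP[k_gt0 _] /andP[_ k_le]; apply: mu_dec; lia.
all: by rewrite inE ?i_gt0 ?leqnn.
Qed.

Lemma aext_ge0 (a : tarray r) :
    (forall p : posroot r, aext lam a (rt p).+1 (ct p).+1 <= a p) ->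
  forall i j, (0 < i)%N -> (i < j)%N -> (j <= r.+2)%N -> 0 <= aext lam a i j.
Proof.
move=> a_diag i j; move Ed: (r.+2 - j)%N => d.
elim: d i j Ed => [|d IHd] i j Ed i_gt0 ij j_le.
  have -> : j = r.+2 by lia.
  by rewrite /aext eqxx mu_ge0 //; lia.
have [p [ip jp]] := posroot_at i_gt0 ij (ltac:(lia) : (j < r.+2)%N).
rewrite -ip -jp aext_posroot; apply: le_trans (a_diag p) => //.
by apply: IHd; case: (posrootP p); lia.
Qed.

Lemma f_GT (m : tarray r) : Lu lam m -> GT lam (f lam m).
Proof.
case=> m_ge0 s_ge; have f_diag p : aext lam (f lam m) (rt p).+1 (ct p).+1 <= f lam m p.
  by rewrite -subr_ge0 -s_ij_f -lerBlDr sub0r.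
split=> p; last split=> //.
- have [rt_gt0 rt_ct ct_lt] := posrootP p.
  by rewrite -[f _ _ p]aext_posroot aext_ge0 // ltnW.
- by rewrite -subr_ge0 f_row_increment.
Qed.

Lemma g_Lu (a : tarray r) : GT lam a -> Lu lam (g lam a).
Proof.
case=> _ a_interlace; split=> p; have [a_up a_diag] := a_interlace p.
- by rewrite ffunE subr_ge0.
- by rewrite -(lerD2r 1) addNr s_ij_f fK subr_ge0.
Qed.

End GelfandTsetlinBijection.

Theorem mainTheorem5 (r : nat) (lam : 'I_(r.+1) -> int) :
  (1 <= r)%N -> is_partition lam ->
  [/\ (forall m : tarray r, Lu lam m -> GT lam (f lam m)),
      (forall a : tarray r, GT lam a -> Lu lam (g lam a)),
      (forall m : tarray r, Lu lam m -> g lam (f lam m) = m),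
      (forall a : tarray r, GT lam a -> f lam (g lam a) = a) &
      (forall (F : fieldType) (z : 'I_(r.+1) -> F),
          (forall i, z i != 0) ->
          forall m : tarray r, Lu lam m -> zwT lam z (f lam m) = zwm z m)].
Proof.
move=> _ lam_partition; split.
- exact: f_GT.
- exact: g_Lu.
- by move=> m _; apply: gK.
- by move=> a _; apply: fK.
- move=> F z _ m _; apply: eq_bigr => p _.
  by rewrite f_row_increment.
Qed.
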